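(* Let $U,V$, $\gamma$, $\pi$, $B$ and the bijection $\theta:V\to B$ be as described in the context. Transport to $V$ (denoted $\underline V$) the left $U^{\rm cop}$-action and left $U^{\rm cop}$-coaction of $B$ via $\theta$, i.e. $m\rhd y=\theta^{-1}(m\triangleright\theta(y))$ and $\lambda_{\underline V}=({\rm Id}\otimes\theta^{-1})\circ\lambda_B\circ\theta$. Then for all $m\in U$, $y\in V$: $$m\rhd y=\langle m_1,S_V^{-1}(y_1)\rangle\langle m_2,S_V^{-2}(y_3)\rangle\, y_2=\langle m,S_V^{-1}(S_V^{-1}(y_3)y_1)\rangle\, y_2,\qquad \lambda_{\underline V}(y)=\gamma(S_V^{-1}(y_3)y_1)\otimes y_2.$$
   Context: Sweedler notation; subscripts on $m,y$ refer to comultiplication in $U$, $V$. $U,V$ are Hopf algebras with bijective antipodes and $\langle\,,\rangle:U\otimes V\to k$ is a pairing ($\langle mn,x\rangle=\langle m,x_1\rangle\langle n,x_2\rangle$, $\langle m,xy\rangle=\langle m_1,x\rangle\langle m_2,y\rangle$, $\langle 1,x\rangle=\varepsilon(x)$, $\langle m,1\rangle=\varepsilon(m)$). $D=D(U^{\rm cop},V)$ is the Hopf algebra on $U\otimes V$ with unit $1\otimes1$, multiplication $(m\otimes x)(n\otimes y)=\langle n_3,x_1\rangle\langle S_U^{-1}(n_1),x_3\rangle mn_2\otimes x_2y$, comultiplication $\Delta(m\otimes x)=(m_2\otimes x_1)\otimes(m_1\otimes x_2)$; $i:U^{\rm cop}\to D$, $i(m)=m\otimes 1$. $\gamma:V\to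 U^{\rm cop}$ is a Hopf algebra map with $\gamma(y)m=\langle S_U^{-1}(m_1),y_3\rangle\langle m_3,y_1\rangle m_2\gamma(y_2)$; $\pi:D\to U^{\rm cop}$, $\pi(m\otimes x)=m\gamma(x)$, a Hopf map with $\pi\circ i={\rm Id}$. $B=\{a\in D\mid a_1\otimes\pi(a_2)=a\otimes 1\}$ with left $U^{\rm cop}$-action $\kappa\triangleright a=i(\kappa_{(1)})\,a\,i(S_{U^{\rm cop}}(\kappa_{(2)}))$, where $\kappa_{(1)}\otimes\kappa_{(2)}$ is the comultiplication of $U^{\rm cop}$ (i.e. $\kappa_{(1)}=\kappa_2$, $\kappa_{(2)}=\kappa_1$) and $S_{U^{\rm cop}}=S_U^{-1}$, and coaction $\lambda_B(b)=\pi(b_1)\otimes b_2$. $\theta:V\to B$, $\theta(y)=S_U(\gamma(y_2))\otimes y_1$, is a bijection. *)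

(* Hopf algebras over a field k, encoded with finite
   Sweedler sums: a tensor in A (x) B is a finite formal sum [seq (a_i, b_i)],
   and two such sums are equal as tensors iff every bilinear (resp. trilinear)
   form takes the same value on them (over a field this is exactly equality in
   the tensor product, since (A (x) B)^* = Bil(A,B;k) separates points). *)
From HB Require Import structures.
From mathcomp Require Import all_boot all_order all_algebra.
Set Implicit Arguments. Unset Strict Implicit. Unset Printing Implicit Defensive.
Import GRing.Theory.
Local Open Scope ring_scope.

Section Hopf.
Variable k : fieldType.

Definition klin (A W : lmodType k) (f : A -> W) :=
  forall (a : k) (x y : A), f (a *: x + y) = a *: f x + f y.
Definition kform (A : lmodType k) (f : A -> k) :=
  forall (a : k) (x y : A), f (a *: x + y) = a * f x + f y.

Definition bilinform (A B : lmodType k) (phi : A -> B -> k) :=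
  (forall b, kform (fun a => phi a b)) /\ (forall a, kform (phi a)).

Definition trilinform (A B C : lmodType k) (phi : A -> B -> C -> k) :=
  [/\ (forall b c, kform (fun a => phi a b c)),
      (forall a c, kform (fun b => phi a b c)) &
      (forall a b, kform (phi a b))].

Definition teq2 (A B : lmodType k) (s t : seq (A * B)) :=
  forall phi : A -> B -> k, bilinform phi ->
    \sum_(p <- s) phi p.1 p.2 = \sum_(p <- t) phi p.1 p.2.

Definition teq3 (A B C : lmodType k) (s t : seq (A * B * C)) :=
  forall phi : A -> B -> C -> k, trilinform phi ->
    \sum_(p <- s) phi p.1.1 p.1.2 p.2 = \sum_(p <- t) phi p.1.1 p.1.2 p.2.

Record hopf (H : lmodType k) := Hopf {
  hmul : H -> H -> H;
  hone : H;
  hcop : H -> seq (H * H);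
  heps : H -> k;
  hS : H -> H;
  hSinv : H -> H;
  hmul_linl : forall b, klin (fun a => hmul a b);
  hmul_linr : forall a, klin (hmul a);
  hmulA : associative hmul;
  hmul1l : left_id hone hmul;
  hmul1r : right_id hone hmul;
  hcop_lin : forall (a : k) (x y : H),
    teq2 (hcop (a *: x + y)) ([seq (a *: p.1, p.2) | p <- hcop x] ++ hcop y);
  hcoassoc : forall x,
    teq3 [seq (q.1, q.2, p.2) | p <- hcop x, q <- hcop p.1]
         [seq (p.1, q.1, q.2) | p <- hcop x, q <- hcop p.2];
  heps_lin : kform heps;
  hcounitl : forall x, \sum_(p <- hcop x) heps p.1 *: p.2 = x;
  hcounitr : forall x, \sum_(p <- hcop x) heps p.2 *: p.1 = x;
  hcop_mul : forall x y,
    teq2 (hcop (hmul x y)) [seq (hmul p.1 q.1, hmul p.2 q.2) | p <- hcop x, q <- hcop y];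
  hcop_one : teq2 (hcop hone) [:: (hone, hone)];
  heps_mul : forall x y, heps (hmul x y) = heps x * heps y;
  heps_one : heps hone = 1;
  hS_lin : klin hS;
  hS_l : forall x, \sum_(p <- hcop x) hmul (hS p.1) p.2 = heps x *: hone;
  hS_r : forall x, \sum_(p <- hcop x) hmul p.1 (hS p.2) = heps x *: hone;
  hSK : cancel hS hSinv;
  hSinvK : cancel hSinv hS
}.

Definition cop2 (H : lmodType k) (h : hopf H) (x : H) : seq (H * H * H) :=
  [seq (p.1, q.1, q.2) | p <- hcop h x, q <- hcop h p.2].

Section Pairing.
Variables (U V : lmodType k) (HU : hopf U) (HV : hopf V).

Definition is_pairing (pr : U -> V -> k) :=
  [/\ bilinform pr,
      (forall m n x, pr (hmul HU m n) x = \sum_(p <- hcop HV x) pr m p.1 * pr n p.2),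
      (forall m x y, pr m (hmul HV x y) = \sum_(p <- hcop HU m) pr p.1 x * pr p.2 y),
      (forall x, pr (hone HU) x = heps HV x) &
      (forall m, pr m (hone HV) = heps HU m)].

(* gamma : V -> U^cop is a Hopf algebra (= bialgebra) map; U^cop has the
   multiplication of U and the opposite comultiplication. *)
Definition is_hopf_map_to_cop (g : V -> U) :=
  [/\ klin g,
      (forall x y, g (hmul HV x y) = hmul HU (g x) (g y)),
      g (hone HV) = hone HU,
      (forall y, teq2 (hcop HU (g y)) [seq (g p.2, g p.1) | p <- hcop HV y]) &
      (forall y, heps HU (g y) = heps HV y)].

Definition gamma_comm (pr : U -> V -> k) (g : V -> U) :=
  forall (y : V) (m : U),
    hmul HU (g y) m =
    \sum_(c <- cop2 HU m) \sum_(b <- cop2 HV y)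
       (pr (hSinv HU c.1.1) b.2 * pr c.2 b.1.1) *: hmul HU c.1.2 (g b.1.2).

Variables (pr : U -> V -> k) (g : V -> U).

(* D = D(U^cop, V) on U (x) V; elements are finite sums of pure tensors *)
Definition Dmul_pure (m : U) (x : V) (n : U) (y : V) : seq (U * V) :=
  [seq ((pr c.2 b.1.1 * pr (hSinv HU c.1.1) b.2) *: hmul HU m c.1.2,
        hmul HV b.1.2 y) | c <- cop2 HU n, b <- cop2 HV x].

Definition Dmul (s t : seq (U * V)) : seq (U * V) :=
  flatten [seq Dmul_pure p.1 p.2 q.1 q.2 | p <- s, q <- t].

Definition iD (m : U) : seq (U * V) := [:: (m, hone HV)].

(* kappa |> a = i(kappa_(1)) a i(S_{U^cop}(kappa_(2))),
   kappa_(1) = kappa_2, kappa_(2) = kappa_1, S_{U^cop} = S_U^{-1} *)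
Definition Dact (kappa : U) (a : seq (U * V)) : seq (U * V) :=
  flatten [seq Dmul (Dmul (iD p.2) a) (iD (hSinv HU p.1)) | p <- hcop HU kappa].

(* lambda_B(b) = pi(b_1) (x) b_2, with Delta(m (x) x) = (m_2 (x) x_1) (x) (m_1 (x) x_2)
   and pi(m (x) x) = m gamma(x); the result lies in U (x) D = U (x) (U (x) V). *)
Definition lamB (b : seq (U * V)) : seq (U * (U * V)) :=
  flatten [seq [seq (hmul HU q.2 (g r.1), (q.1, r.2)) | q <- hcop HU p.1, r <- hcop HV p.2]
          | p <- b].

Definition theta (y : V) : seq (U * V) := [seq (hS HU (g p.2), p.1) | p <- hcop HV y].

End Pairing.

Definition reassoc (A B C : Type) (s : seq (A * (B * C))) : seq (A * B * C) :=
  [seq (p.1, p.2.1, p.2.2) | p <- s].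

End Hopf.

From HB Require Import structures.
From mathcomp Require Import all_boot all_order all_algebra.
From mathcomp Require boolp classical_sets.
From mathcomp Require Import ring.
Import GRing.Theory.
Local Open Scope ring_scope.
Set Implicit Arguments. Unset Strict Implicit. Unset Printing Implicit Defensive.

(* Over a field a tensor is determined by the values of all multilinear forms
   on it, and a vector by the values of all linear forms (by Zorn's lemma), so
   identities of tensors given as [teq2]/[teq3] may be used to rewrite finite
   Sweedler sums of arbitrary vector-valued multilinear expressions.
   The second identity is the pairing axiom for <m, xy> together with S^-1
   being antimultiplicative.  The coaction formula follows from gamma being a
   coalgebra map into U^cop with gamma o S_V^-1 = S_U o gamma.  For the action
   one expands m |> theta(y) = i(m_2) theta(y) i(S_U^-1 m_1) in D, moves
   S_U(gamma(y_2)) = gamma(S_V^-1 y_2) past S_U^-1(m_1) with the commutation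
   rule of gamma, and collapses the resulting Sweedler sum with the (co)unit and
   antipode axioms of U and V, using <S m, x> = <m, S x>. *)

Section LinearFormSeparation.
Import boolp classical_sets.
Local Open Scope classical_set_scope.
Variables (k : fieldType) (W : lmodType k).

Definition lin_graph (A : set (W * k)) :=
  (forall x a b, A (x, a) -> A (x, b) -> a = b) /\
  (forall c x a y b, A (x, a) -> A (y, b) -> A (c *: x + y, c * a + b)).

Lemma lin_graph0 A w a : lin_graph A -> A (w, a) -> A (0, 0).
Proof.
move=> [_ cl] Hw; have := cl (-1) _ _ _ _ Hw Hw.
by rewrite scaleN1r addNr mulN1r addNr.
Qed.

Lemma lin_graphZ A w a c : lin_graph A -> A (w, a) -> A (c *: w, c * a).
Proof.
move=> H Hw; have := H.2 c _ _ _ _ Hw (lin_graph0 H Hw); by rewrite !addr0.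
Qed.

Lemma lin_graphD A w a w' a' :
  lin_graph A -> A (w, a) -> A (w', a') -> A (w + w', a + a').
Proof. move=> H Hw Hw'; have := H.2 1 _ _ _ _ Hw Hw'; by rewrite scale1r mul1r. Qed.

Definition graph_ext (A : set (W * k)) (x : W) (b : k) : set (W * k) :=
  fun p => exists w a c, A (w, a) /\ p = (w + c *: x, a + c * b).

Lemma lin_graph_ext A x b :
  lin_graph A -> (forall a, ~ A (x, a)) -> lin_graph (graph_ext A x b).
Proof.
move=> H nx; split.
- move=> y a1 a2 [w [a [c [Ha [-> ->]]]]] [w' [a' [c' [Ha' [E ->]]]]].
  have [cc|ncc] := eqVneq c c'.
    subst c'; move/addIr: E => ?; subst w'.
    by rewrite (H.1 _ _ _ Ha Ha').
  exfalso; apply: (nx ((c - c')^-1 * (a' - a))).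
  have -> : x = (c - c')^-1 *: (w' - w).
    apply/(@scalerI _ _ (c - c')); first by rewrite subr_eq0.
    rewrite scalerA mulfV ?subr_eq0 // scale1r scalerBl.
    by apply/eqP; rewrite subr_eq addrAC -E addrAC subrr add0r.
  apply: lin_graphZ => //; apply: lin_graphD => //.
  by have := lin_graphZ (-1) H Ha; rewrite scaleN1r mulN1r.
- move=> d y a1 z a2 [w [a [c [Ha [-> ->]]]]] [w' [a' [c' [Ha' [-> ->]]]]].
  exists (d *: w + w'), (d * a + a'), (d * c + c'); split; first exact: H.2.
  congr (_, _).
    by rewrite scalerDr scalerDl scalerA; rewrite addrACA.
  by rewrite mulrDr mulrDl mulrA addrACA.
Qed.

Lemma graph_ext_sub A x b : lin_graph A -> A `<=` graph_ext A x b.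
Proof. by move=> H [w a] Ha; exists w, a, 0; rewrite scale0r mul0r !addr0. Qed.

Lemma graph_ext_point A x b w a : lin_graph A -> A (w, a) -> graph_ext A x b (x, b).
Proof.
move=> H Hw; exists 0, 0, 1; split; first exact: lin_graph0 Hw.
by rewrite add0r scale1r mul1r add0r.
Qed.

Definition graph_eq1 (v : W) (A : set (W * k)) :=
  lin_graph A /\ (forall a, A (v, a) -> a = 1).

Lemma exists_max_graph_eq1 v :
  exists A, graph_eq1 v A /\ forall B, A `<` B -> ~ graph_eq1 v B.
Proof.
apply: Zorn_bigcup => F FP Ftot; split; [split|].
- move=> x a b [X FX Xa] [Y FY Yb].
  have [XY|YX] := Ftot _ _ FX FY.
    by apply: (FP _ FY).1.1 (XY _ Xa) Yb.
  by apply: (FP _ FX).1.1 Xa (YX _ Yb).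
- move=> c x a y b [X FX Xa] [Y FY Yb].
  have [XY|YX] := Ftot _ _ FX FY.
    by exists Y => //; apply: (FP _ FY).1.2 (XY _ Xa) Yb.
  by exists X => //; apply: (FP _ FX).1.2 Xa (YX _ Yb).
- by move=> a [X FX Xa]; apply: (FP _ FX).2 Xa.
Qed.

Section MaximalGraph.
Variables (v : W) (A : set (W * k)).
Hypotheses (v0 : v != 0) (Av : graph_eq1 v A)
  (Amax : forall B, A `<` B -> ~ graph_eq1 v B).

Lemma max_graph_eq1_nonempty : exists wa, A wa.
Proof.
apply: contrapT => /forallNP Ae.
pose B0 : set (W * k) := fun p => exists c, p = (c *: v, c).
apply: (Amax (B:=B0)).
  split; first by move=> p /Ae.
  move=> H; apply: (Ae (v, 1)); apply: H; exists 1; by rewrite scale1r.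
split; [split|].
- move=> x a b [c [-> ->]] [c' [E ->]].
  apply/eqP; rewrite -subr_eq0; apply: contraTT v0 => cc.
  have : (c - c') *: v = 0 by rewrite scalerBl E subrr.
  by move/eqP; rewrite scaler_eq0 (negbTE cc) negbK.
- move=> c x a y b [d [-> ->]] [d' [-> ->]].
  by exists (c * d + d'); rewrite scalerDl scalerA.
- move=> a [c [E ->]].
  apply/eqP; rewrite -subr_eq0; apply: contraTT v0 => cc.
  have : (c - 1) *: v = 0 by rewrite scalerBl -E scale1r subrr.
  by move/eqP; rewrite scaler_eq0 (negbTE cc) negbK.
Qed.

Lemma max_graph_eq1_total x : exists a, A (x, a).
Proof.
have [HA A1] := Av.
have [[w0 a0] Aw0] := max_graph_eq1_nonempty.
have grow y b : (forall a, ~ A (y, a)) -> A `<` graph_ext A y b.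
  move=> ny; split; first exact: graph_ext_sub.
  by move=> /(_ (y, b) (graph_ext_point y b HA Aw0)) /ny.
have [av Hav] : exists a, A (v, a).
  apply: contrapT => /forallNP nv.
  apply: (Amax (grow v 1 nv)); split; first exact: lin_graph_ext.
  move=> a' [w [a [c [Ha E]]]]; case: E => Ev ->.
  have [c1|c1] := eqVneq c 1.
    subst c; move: Ev; rewrite scale1r => /(congr1 (fun z => z - v)).
    rewrite subrr addrK => ?; subst w.
    by rewrite (HA.1 _ _ _ Ha (lin_graph0 HA Ha)) mul1r add0r.
  exfalso; apply: (nv ((1 - c)^-1 * a)).
  have -> : v = (1 - c)^-1 *: w.
    apply/(@scalerI _ _ (1 - c)); first by rewrite subr_eq0 eq_sym.
    rewrite scalerA mulfV ?subr_eq0 1?eq_sym // scale1r scalerBl scale1r.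
    by rewrite {1}Ev addrK.
  exact: lin_graphZ.
apply: contrapT => /forallNP nx.
apply: (Amax (grow x 0 nx)); split; first exact: lin_graph_ext.
move=> a' Ha'; apply: (lin_graph_ext 0 HA nx).1 Ha' _.
have av1 := A1 _ Hav; subst av; exact: graph_ext_sub.
Qed.

End MaximalGraph.

Lemma exists_kform_eq1 (v : W) : v != 0 -> exists f : W -> k, kform f /\ f v = 1.
Proof.
move=> v0; have [A [Av Amax]] := exists_max_graph_eq1 v.
pose f x := projT1 (cid (max_graph_eq1_total v0 Av Amax x)).
have fP x : A (x, f x) by rewrite /f; case: cid.
exists f; split; last exact: Av.2.
by move=> a x y; apply: Av.1.1 (fP _) _; exact: Av.1.2.
Qed.

Lemma kform_separate (a b : W) : (forall f : W -> k, kform f -> f a = f b) -> a = b.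
Proof.
move=> H; apply/eqP; rewrite -subr_eq0; apply/negPn/negP => /exists_kform_eq1 [f [fl f1]].
have fD x y : f (x + y) = f x + f y by have := fl 1 x y; rewrite scale1r mul1r.
have f0 : f 0 = 0 by apply: (addIr (f 0)); rewrite -fD !add0r.
have fN x : f (- x) = - f x by apply: (addrI (f x)); rewrite -fD !subrr.
by move: f1; rewrite fD fN (H f fl) subrr => /eqP; rewrite eq_sym oner_eq0.
Qed.

End LinearFormSeparation.

Section Linearity.
Variable k : fieldType.
Implicit Types A B C W : lmodType k.

Lemma klin0 A W (f : A -> W) : klin f -> f 0 = 0.
Proof.
move=> fl; have := fl 1 0 0; rewrite !scale1r addr0.
by move=> /(congr1 (fun z => z - f 0)); rewrite subrr addrK => H; rewrite -H.
Qed.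
Lemma klinD A W (f : A -> W) x y : klin f -> f (x + y) = f x + f y.
Proof. by move=> fl; have := fl 1 x y; rewrite !scale1r. Qed.
Lemma klinZ A W (f : A -> W) c x : klin f -> f (c *: x) = c *: f x.
Proof. by move=> fl; have := fl c x 0; rewrite !addr0 (klin0 fl) addr0. Qed.
Lemma klin_sum A W (f : A -> W) I (s : seq I) (F : I -> A) :
  klin f -> f (\sum_(i <- s) F i) = \sum_(i <- s) f (F i).
Proof.
move=> fl; elim: s => [|i s IH]; first by rewrite !big_nil klin0.
by rewrite !big_cons klinD // IH.
Qed.

Lemma lin_id A : klin (fun a : A => a). Proof. by []. Qed.
Lemma lin_comp A B W (f : B -> W) (X : A -> B) :
  klin f -> klin X -> klin (fun a => f (X a)).
Proof. by move=> fl Xl c x y; rewrite Xl fl. Qed.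
Lemma lin_add A W (X Y : A -> W) : klin X -> klin Y -> klin (fun a => X a + Y a).
Proof.
move=> Xl Yl c x y; rewrite Xl Yl scalerDr.
by rewrite -!addrA; congr (_ + _); rewrite addrCA.
Qed.
Lemma lin_sum A W I (s : seq I) (G : A -> I -> W) :
  (forall i, klin (G ^~ i)) -> klin (fun a => \sum_(i <- s) G a i).
Proof.
move=> Gl c x y; rewrite scaler_sumr -big_split /=.
by apply: eq_bigr => i _; rewrite Gl.
Qed.
Lemma lin_scale W (c : k) : klin (fun v : W => c *: v).
Proof. by move=> a x y; rewrite scalerDr !scalerA mulrC. Qed.
Lemma lin_scaler W (c : k) : klin (@GRing.scale k W c).
Proof. exact: lin_scale. Qed.
Lemma lin_scalel A W (P : A -> k) (v : W) :
  @klin k A k^o P -> klin (fun a => P a *: v).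
Proof. by move=> Pl c x y; rewrite Pl scalerDl scalerA. Qed.
Lemma lin_mulrl A (P : A -> k) (c : k) :
  @klin k A k^o P -> @klin k A k^o (fun a => P a * c).
Proof. by move=> Pl a x y; rewrite Pl mulrDl -mulrA. Qed.
Lemma lin_mullr A (P : A -> k) (c : k) :
  @klin k A k^o P -> @klin k A k^o (fun a => c * P a).
Proof. by move=> Pl a x y; rewrite Pl mulrDr mulrCA. Qed.

Definition klin2 A B W (F : A -> B -> W) :=
  (forall b, klin (F ^~ b)) /\ (forall a, klin (F a)).
Definition klin3 A B C W (F : A -> B -> C -> W) :=
  [/\ (forall b c, klin (fun a => F a b c)), (forall a c, klin (fun b => F a b c))
    & (forall a b, klin (F a b))].

Lemma teq2_sum A B W (s t : seq (A * B)) (F : A -> B -> W) :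
  teq2 s t -> klin2 F -> \sum_(p <- s) F p.1 p.2 = \sum_(p <- t) F p.1 p.2.
Proof.
move=> st [F1 F2]; apply: kform_separate => f fl.
have fk : @klin k W k^o f by [].
rewrite !(klin_sum _ _ fk); apply: (st (fun a b => f (F a b))).
by split=> ?; [exact: (lin_comp fk (F1 _)) | exact: (lin_comp fk (F2 _))].
Qed.

Lemma teq3_sum A B C W (s t : seq (A * B * C)) (F : A -> B -> C -> W) :
  teq3 s t -> klin3 F ->
  \sum_(p <- s) F p.1.1 p.1.2 p.2 = \sum_(p <- t) F p.1.1 p.1.2 p.2.
Proof.
move=> st [F1 F2 F3]; apply: kform_separate => f fl.
have fk : @klin k W k^o f by [].
rewrite !(klin_sum _ _ fk); apply: (st (fun a b c => f (F a b c))).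
split=> *; [exact: (lin_comp fk (F1 _ _)) | exact: (lin_comp fk (F2 _ _))
          | exact: (lin_comp fk (F3 _ _))].
Qed.

End Linearity.

Section Sweedler.
Variables (k : fieldType) (H : lmodType k) (h : hopf H).

Definition sw (W : lmodType k) (x : H) (F : H -> H -> W) : W :=
  \sum_(p <- hcop h x) F p.1 p.2.

Lemma hSinv_lin : klin (hSinv h).
Proof. by move=> c x y; apply: (can_inj (hSK h)); rewrite hS_lin !hSinvK. Qed.
Lemma heps_klin : @klin k H k^o (heps h).
Proof. exact: heps_lin. Qed.

Variable W : lmodType k.
Implicit Types F G : H -> H -> W.

Lemma sw_lin F : klin2 F -> klin (fun x => sw x F).
Proof.
move=> [F1 F2] c x y; rewrite /sw (teq2_sum (F:=F) (hcop_lin h c x y) (conj F1 F2)).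
rewrite big_cat big_map scaler_sumr /=; congr (_ + _).
by apply: eq_bigr => p _; rewrite (klinZ _ _ (F1 p.2)).
Qed.

Lemma sw_addF F G x : sw x (fun a b => F a b + G a b) = sw x F + sw x G.
Proof. by rewrite /sw big_split. Qed.
Lemma sw_scaleF F c x : sw x (fun a b => c *: F a b) = c *: sw x F.
Proof. by rewrite /sw scaler_sumr. Qed.
Lemma lin_swF (A : lmodType k) (G : A -> H -> H -> W) x :
  (forall u v, klin (fun a => G a u v)) -> klin (fun a => sw x (G a)).
Proof. by move=> Gl; apply: lin_sum. Qed.
Lemma eq_sw x F G : (forall a b, F a b = G a b) -> sw x F = sw x G.
Proof. by move=> FG; apply: eq_bigr => p _; rewrite FG. Qed.

Lemma sw_mul F x y : klin2 F ->
  sw (hmul h x y) F = sw x (fun a b => sw y (fun c d => F (hmul h a c) (hmul h b d))).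
Proof.
by move=> Fb; rewrite /sw (teq2_sum (F:=F) (hcop_mul h x y) Fb) big_allpairs_dep.
Qed.

Lemma sw_one F : klin2 F -> sw (hone h) F = F (hone h) (hone h).
Proof. by move=> Fb; rewrite /sw (teq2_sum (F:=F) (hcop_one h) Fb) big_seq1. Qed.

Lemma sw_counitl (G : H -> W) x : klin G -> sw x (fun a b => heps h a *: G b) = G x.
Proof.
move=> Gl; rewrite -{2}(hcounitl h x) (klin_sum _ _ Gl).
by apply: eq_bigr => p _; rewrite (klinZ _ _ Gl).
Qed.
Lemma sw_counitr (G : H -> W) x : klin G -> sw x (fun a b => heps h b *: G a) = G x.
Proof.
move=> Gl; rewrite -{2}(hcounitr h x) (klin_sum _ _ Gl).
by apply: eq_bigr => p _; rewrite (klinZ _ _ Gl).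
Qed.
Lemma sw_Sl (G : H -> W) x : klin G ->
  sw x (fun a b => G (hmul h (hS h a) b)) = heps h x *: G (hone h).
Proof. by move=> Gl; rewrite /sw -(klin_sum _ _ Gl) hS_l (klinZ _ _ Gl). Qed.
Lemma sw_Sr (G : H -> W) x : klin G ->
  sw x (fun a b => G (hmul h a (hS h b))) = heps h x *: G (hone h).
Proof. by move=> Gl; rewrite /sw -(klin_sum _ _ Gl) hS_r (klinZ _ _ Gl). Qed.

Lemma sw_coassoc (F : H -> H -> H -> W) x : klin3 F ->
  sw x (fun a b => sw a (fun c d => F c d b)) = sw x (fun a b => sw b (fun c d => F a c d)).
Proof. by move=> Ft; have := teq3_sum (hcoassoc h x) Ft; rewrite /sw !big_allpairs_dep. Qed.

End Sweedler.

Lemma sw_exch (k : fieldType) (W H H' : lmodType k) (h : hopf H) (h' : hopf H') x y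
   (G : H -> H -> H' -> H' -> W) :
  sw h x (fun a b => sw h' y (G a b)) = sw h' y (fun c d => sw h x (fun a b => G a b c d)).
Proof. by rewrite /sw exchange_big. Qed.

Lemma eq_swk (k : fieldType) (H : lmodType k) (h : hopf H) x (F G : H -> H -> k) :
  (forall a b, F a b = G a b) -> @sw k H h k^o x F = @sw k H h k^o x G.
Proof. exact: (@eq_sw k H h k^o x F G). Qed.

Lemma klin_sw (k : fieldType) (H W W' : lmodType k) (h : hopf H) (G : W -> W') x F :
  klin G -> G (sw h x F) = sw h x (fun a b => G (F a b)).
Proof. by move=> Gl; rewrite /sw (klin_sum _ _ Gl). Qed.

Lemma mul_sw (k : fieldType) (H : lmodType k) (h : hopf H) (c : k) x (F : H -> H -> k) :
  c * @sw _ _ h k^o x F = @sw _ _ h k^o x (fun a b => c * F a b).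
Proof. by rewrite /sw mulr_sumr. Qed.

Lemma swk_counitl (k : fieldType) (H : lmodType k) (h : hopf H) (G : H -> k) x :
  @klin k H k^o G -> @sw _ _ h k^o x (fun a b => heps h a * G b) = G x.
Proof. exact: (@sw_counitl _ _ h k^o G x). Qed.
Lemma swk_counitr (k : fieldType) (H : lmodType k) (h : hopf H) (G : H -> k) x :
  @klin k H k^o G -> @sw _ _ h k^o x (fun a b => heps h b * G a) = G x.
Proof. exact: (@sw_counitr _ _ h k^o G x). Qed.

Section IteratedSweedler.
Variables (k : fieldType) (H : lmodType k) (h : hopf H) (W : lmodType k).

(* [swl n x F] is the Sweedler sum of [F [:: x_1; ...; x_(n+1)]] over the
   iterated coproduct of [x]; the legs are read from the list by position. *)
Fixpoint swl (n : nat) (x : H) (F : seq H -> W) : W :=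
  if n is n'.+1 then sw h x (fun a b => swl n' b (fun l => F (a :: l))) else F [:: x].

Definition multilin (n : nat) (F : seq H -> W) :=
  forall l i, size l = n.+1 -> (i <= n)%N -> klin (fun a => F (set_nth 0 l i a)).

Lemma swl_addF n x (F G : seq H -> W) :
  swl n x (fun l => F l + G l) = swl n x F + swl n x G.
Proof.
elim: n x F G => [|n IH] x F G //=.
by rewrite -sw_addF; apply: eq_sw => a b; exact: IH.
Qed.
Lemma swl_scaleF n x c (F : seq H -> W) :
  swl n x (fun l => c *: F l) = c *: swl n x F.
Proof.
elim: n x F => [|n IH] x F //=.
by rewrite -sw_scaleF; apply: eq_sw => a b; exact: IH.
Qed.
Lemma eq_swl n x (F G : seq H -> W) :
  (forall l, size l = n.+1 -> F l = G l) -> swl n x F = swl n x G.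
Proof.
elim: n x F G => [|n IH] x F G FG /=; first exact: FG.
apply: eq_sw => a b; apply: IH => l sl; apply: FG; by rewrite /= sl.
Qed.
Lemma lin_swlF (A : lmodType k) n x (G : A -> seq H -> W) :
  (forall l, size l = n.+1 -> klin (fun a => G a l)) -> klin (fun a => swl n x (G a)).
Proof.
move=> Gl c u v; rewrite -swl_scaleF -swl_addF; apply: eq_swl => l sl.
exact: Gl.
Qed.

Lemma multilin_cons n (F : seq H -> W) a :
  multilin n.+1 F -> multilin n (fun l => F (a :: l)).
Proof. by move=> mF l i sl iln; apply: (mF (a :: l) i.+1) => //=; rewrite sl. Qed.

Lemma swl_lin n (F : seq H -> W) : multilin n F -> klin (fun x => swl n x F).
Proof.
elim: n F => [|n IH] F mF /=.
  exact: (mF [:: 0] 0%N erefl (leqnn 0)).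
apply: sw_lin; split => [b|a].
  apply: lin_swlF => l sl; apply: (mF (0 :: l) 0%N) => //=; by rewrite sl.
by apply: IH; exact: multilin_cons.
Qed.

End IteratedSweedler.

Lemma swl_sw (k : fieldType) (W H H' : lmodType k) (h : hopf H) (h' : hopf H') n x y
   (G : seq H -> H' -> H' -> W) :
  swl h n x (fun l => sw h' y (G l)) = sw h' y (fun c d => swl h n x (fun l => G l c d)).
Proof.
elim: n x G => [|n IH] x G //=.
by rewrite sw_exch; apply: eq_sw => a b; exact: IH.
Qed.

(* Coassociativity: splitting the leg [i] of an (n+1)-fold coproduct gives the
   (n+2)-fold one. *)
Lemma swl_split (k : fieldType) (W H : lmodType k) (h : hopf H) n i x (F : seq H -> W) :
  (i <= n)%N -> multilin n.+1 F ->
  swl h n.+1 x F =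
  swl h n x (fun l => sw h (nth 0 l i) (fun a b => F (take i l ++ a :: b :: drop i.+1 l))).
Proof.
elim: n i x F => [|n IH] i x F; first by case: i.
case: i => [|j] ijn mF; last first.
  transitivity (sw h x (fun a b => swl h n.+1 b (fun l => F (a :: l)))); first by [].
  by apply: eq_sw => a b; rewrite (IH j) //; exact: multilin_cons.
transitivity (sw h x (fun c d => sw h c (fun a b => swl h n d (fun l => F (a :: b :: l))))).
  rewrite (@sw_coassoc _ _ h _ (fun a b d => swl h n d (fun l => F (a :: b :: l))) x) //.
  split.
  - move=> b c; apply: lin_swlF => l sl; apply: (mF (0 :: b :: l) 0%N) => //=; by rewrite sl.
  - move=> a c; apply: lin_swlF => l sl; apply: (mF (a :: 0 :: l) 1%N) => //=; by rewrite sl.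
  - move=> a b; apply: (@swl_lin _ _ h _ n (fun l => F (a :: b :: l))).
    exact: (multilin_cons b (multilin_cons a mF)).
rewrite [in RHS]/=; apply: eq_sw => c d; rewrite swl_sw.
by apply: eq_sw => a b; apply: eq_swl => l _; rewrite drop0.
Qed.

Lemma swl_merge (k : fieldType) (W H : lmodType k) (h : hopf H) n i x (F G : seq H -> W) :
  (i <= n)%N -> multilin n.+1 F ->
  (forall l, size l = n.+1 ->
     sw h (nth 0 l i) (fun a b => F (take i l ++ a :: b :: drop i.+1 l)) = G l) ->
  swl h n.+1 x F = swl h n x G.
Proof. by move=> iln mF FG; rewrite (swl_split _ _ iln mF); apply: eq_swl. Qed.

Lemma swl_merge_out (k : fieldType) (W H H' : lmodType k) (h : hopf H) (h' : hopf H')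
   n m i x y (F G : seq H -> seq H' -> W) :
  (i <= n)%N -> multilin n.+1 (fun K => swl h' m y (F K)) ->
  (forall K Y, size K = n.+1 -> size Y = m.+1 ->
     sw h (nth 0 K i) (fun a b => F (take i K ++ a :: b :: drop i.+1 K) Y) = G K Y) ->
  swl h n.+1 x (fun K => swl h' m y (F K)) = swl h n x (fun K => swl h' m y (G K)).
Proof.
move=> iln mF FG; apply: (@swl_merge _ _ _ h n i) => // K sK.
by rewrite -swl_sw; apply: eq_swl => Y sY; exact: (FG K Y sK sY).
Qed.

Lemma swl_merge_in (k : fieldType) (W H H' : lmodType k) (h : hopf H) (h' : hopf H')
   n m j x y (F G : seq H -> seq H' -> W) :
  (j <= m)%N -> (forall K, size K = n.+1 -> multilin m.+1 (F K)) ->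
  (forall K Y, size K = n.+1 -> size Y = m.+1 ->
     sw h' (nth 0 Y j) (fun a b => F K (take j Y ++ a :: b :: drop j.+1 Y)) = G K Y) ->
  swl h n x (fun K => swl h' m.+1 y (F K)) = swl h n x (fun K => swl h' m y (G K)).
Proof.
move=> jlm mF FG; apply: eq_swl => K sK.
by apply: (@swl_merge _ _ _ h' m j) => // [|Y sY]; [exact: mF | exact: FG].
Qed.
Arguments swl : simpl never.

Create HintDb lindb.
Create HintDb mldefs.
#[export] Hint Resolve hmul_linl hmul_linr hS_lin hSinv_lin heps_klin lin_scale lin_scaler
  lin_id : lindb.

Ltac lin_tac :=
  match goal with
  | |- klin (fun a => a) => exact: lin_id
  | |- klin (fun a => _ + _) => apply: lin_add; lin_tac
  | |- klin (fun a => \sum_(i <- _) _) => apply: lin_sum => ?; lin_tac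
  | |- klin (fun a => @?P a *: ?v) => apply: lin_scalel; lin_tac
  | |- klin (fun a => @?P a * ?c) => apply: lin_mulrl; lin_tac
  | |- klin (fun a => ?c * @?P a) => apply: lin_mullr; lin_tac
  | |- klin (fun a => ?c *: @?X a) => apply: (lin_comp (lin_scale c)); lin_tac
  | |- @klin _ _ ?W (fun a => @sw _ _ ?h ?W' (@?X a) ?G) =>
      apply: (lin_comp (W:=W) (f := fun x => @sw _ _ h W' x G) (X:=X));
      [apply: sw_lin; split => ?; lin_tac | lin_tac]
  | |- klin (fun a => sw ?h ?x (@?G a)) => apply: lin_swF => ? ?; lin_tac
  | |- klin (fun a => swl ?h ?n ?x (@?G a)) => apply: lin_swlF => ? ?; lin_tac
  | |- @klin _ _ ?W (fun a => ?f (@?X a)) =>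
      apply: (lin_comp (W:=W) (f:=f) (X:=X)); [solve [auto with lindb] | lin_tac]
  | |- @klin _ _ ?W (fun a => ?f (@?X a) ?y) =>
      apply: (lin_comp (W:=W) (f:=fun u => f u y) (X:=X)); [solve [auto with lindb] | lin_tac]
  | |- @klin _ _ ?W (fun a => ?f (@?X a) ?y ?z) =>
      apply: (lin_comp (W:=W) (f:=fun u => f u y z) (X:=X)); [solve [auto with lindb] | lin_tac]
  | |- klin _ => solve [auto with lindb]
  end.

Ltac destr_list :=
  repeat match goal with
  | H : size ?l = O |- _ => is_var l; destruct l; [clear H | discriminate H]
  | H : size ?l = S _ |- _ => is_var l; destruct l; [discriminate H | simpl in H; injection H as H]
  end.

Ltac multilin_tac :=
  let l := fresh "l" in let i := fresh "i" in let sl := fresh "sl" in let il := fresh "il" in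
  move=> l i sl il; destr_list;
  case: i il => [|[|[|[|[|[|[|[|i]]]]]]]] il //=; try autounfold with mldefs; lin_tac.

Ltac brw E := let H := fresh "H" in have H := E; cbv beta in H; rewrite H; clear H.

Section AntipodeProperties.
Variables (k : fieldType) (H : lmodType k) (h : hopf H).
Local Notation "a ** b" := (hmul h a b) (at level 40, left associativity).
Local Notation S := (hS h).
Local Notation Si := (hSinv h).
Local Notation e := (heps h).
Local Notation one := (hone h).

Lemma heps_S x : e (S x) = e x.
Proof.
have -> : e (S x) = sw h (W:=k^o) x (fun a b => e b *: (e (S a) : k^o)).
  by rewrite (sw_counitr h (G := fun a => e (S a) : k^o)) //; try lin_tac.
transitivity (sw h (W:=k^o) x (fun a b => e (S a ** b))).
  by apply: (@eq_sw _ _ h k^o x) => a b; rewrite heps_mul mulrC.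
by rewrite (@sw_Sl _ _ h k^o (heps h) x (heps_klin h)) /= heps_one [_ *: _]mulr1.
Qed.

Lemma hS1 : S one = one.
Proof.
have := @sw_one _ _ h _ (fun a b => S a ** b) _ .
rewrite hmul1r => <-; last by split => ?; lin_tac.
by rewrite (@sw_Sl _ _ h _ (fun z => z) one (@lin_id _ _)) /= heps_one scale1r.
Qed.

Lemma hmulZr z c : z ** (c *: one) = c *: z.
Proof. by rewrite (klinZ _ _ (hmul_linr h z)) hmul1r. Qed.

Lemma sw2_mul_antipode u v :
  sw h u (fun a b => sw h v (fun c d => (a ** c) ** (S d ** S b))) = (e u * e v) *: one.
Proof.
transitivity (sw h u (fun a b => e v *: (a ** S b))).
  apply: eq_sw => a b.
  transitivity (sw h v (fun c d => (fun z => (a ** z) ** S b) (c ** S d))).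
    by apply: eq_sw => c d; rewrite /= !hmulA.
  by rewrite (@sw_Sr _ _ h _ (fun z => (a ** z) ** S b) v) /= ?hmul1r //; lin_tac.
by rewrite sw_scaleF (@sw_Sr _ _ h _ (fun z => z) u) // scalerA mulrC.
Qed.

(* [S (x ** y)] and [S y ** S x] are both convolution inverses of the
   multiplication; the following sum is their common value. *)
Lemma hS_mul_sandwich x y :
  sw h x (fun x1 x2 => sw h y (fun y1 y2 =>
    S (x1 ** y1) ** sw h x2 (fun a b => sw h y2 (fun c d => (a ** c) ** (S d ** S b))))) =
  S (x ** y).
Proof.
transitivity (sw h x (fun x1 x2 => e x2 *: sw h y (fun y1 y2 => e y2 *: S (x1 ** y1)))).
  apply: eq_sw => x1 x2; rewrite -sw_scaleF; apply: eq_sw => y1 y2.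
  by rewrite sw2_mul_antipode hmulZr scalerA mulrC.
transitivity (sw h x (fun x1 x2 => e x2 *: S (x1 ** y))).
  apply: eq_sw => x1 x2; congr (_ *: _).
  by rewrite (@sw_counitr _ _ h _ (fun b => S (x1 ** b)) y) //; try lin_tac.
by rewrite (@sw_counitr _ _ h _ (fun a => S (a ** y)) x) //; try lin_tac.
Qed.

Lemma hS_mul x y : S (x ** y) = S y ** S x.
Proof.
pose Phi := fun x1 a b y1 c d => S (x1 ** y1) ** ((a ** c) ** (S d ** S b)).
rewrite -hS_mul_sandwich.
transitivity (sw h x (fun x1 x2 => sw h x2 (fun a b => sw h y (fun y1 y2 => sw h y2
   (fun c d => Phi x1 a b y1 c d))))).
  apply: eq_sw => x1 x2.
  transitivity (sw h y (fun y1 y2 => sw h x2 (fun a b => sw h y2 (fun c d => Phi x1 a b y1 c d)))).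
    apply: eq_sw => y1 y2.
    rewrite (@klin_sw _ _ _ _ h (hmul h (S (x1 ** y1))) x2 _ (hmul_linr h _)).
    apply: eq_sw => a b.
    by rewrite (@klin_sw _ _ _ _ h (hmul h (S (x1 ** y1))) y2 _ (hmul_linr h _)).
  by rewrite sw_exch.
transitivity (sw h x (fun u b => sw h u (fun x1 a => sw h y (fun y1 y2 => sw h y2
   (fun c d => Phi x1 a b y1 c d))))).
  apply: esym; apply: (@sw_coassoc _ _ h _ (fun x1 a b => sw h y (fun y1 y2 => sw h y2
   (fun c d => Phi x1 a b y1 c d))) x).
  by rewrite /Phi; split => *; lin_tac.
transitivity (sw h x (fun u b => sw h u (fun x1 a => sw h y (fun v d => sw h v
   (fun y1 c => Phi x1 a b y1 c d))))).
  apply: eq_sw => u b; apply: eq_sw => x1 a.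
  apply: esym; apply: (@sw_coassoc _ _ h _ (fun y1 c d => Phi x1 a b y1 c d) y).
  by rewrite /Phi; split => *; lin_tac.
transitivity (sw h x (fun u b => sw h y (fun v d => sw h (u ** v)
   (fun p q => (S p ** q) ** (S d ** S b))))).
  apply: eq_sw => u b; rewrite sw_exch; apply: eq_sw => v d.
  rewrite (@sw_mul _ _ h _ (fun p q => (S p ** q) ** (S d ** S b))); last by split => ?; lin_tac.
  by apply: eq_sw => x1 a; apply: eq_sw => y1 c; rewrite /Phi !hmulA.
transitivity (sw h x (fun u b => sw h y (fun v d => e v *: (e u *: (S d ** S b))))).
  apply: eq_sw => u b; apply: eq_sw => v d.
  rewrite (@sw_Sl _ _ h _ (fun z => z ** (S d ** S b))) /=; last by lin_tac.
  by rewrite hmul1l heps_mul scalerA mulrC.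
transitivity (sw h x (fun u b => e u *: (S y ** S b))).
  apply: eq_sw => u b.
  by brw (@sw_counitl _ _ h _ (fun d => e u *: (S d ** S b)) y); try lin_tac.
by brw (@sw_counitl _ _ h _ (fun b => S y ** S b) x); try lin_tac.
Qed.

Section AntipodeCoproduct.
Variables (W : lmodType k) (F : H -> H -> W).
Hypothesis Fb : klin2 F.
Let F1 := Fb.1.
Let F2 := Fb.2.
#[local] Hint Resolve F1 F2 : lindb.

Lemma heps_sw3_conj z p q : e z *: F p q =
  sw h z (fun z1 z' => sw h z' (fun z2 z'' => sw h z'' (fun z3 z4 =>
     F (p ** z1 ** S z4) (q ** z2 ** S z3)))).
Proof.
symmetry.
transitivity (sw h z (fun z1 z' => sw h z' (fun w z4 => sw h w (fun z2 z3 =>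
     F (p ** z1 ** S z4) (q ** z2 ** S z3))))).
  apply: eq_sw => z1 z'; apply: esym.
  apply: (@sw_coassoc _ _ h _ (fun z2 z3 z4 => F (p ** z1 ** S z4) (q ** z2 ** S z3)) z').
  by split => *; lin_tac.
transitivity (sw h z (fun z1 z' => sw h z' (fun w z4 => e w *: F (p ** z1 ** S z4) q))).
  apply: eq_sw => z1 z'; apply: eq_sw => w z4.
  transitivity (sw h w (fun z2 z3 => (fun t => F (p ** z1 ** S z4) (q ** t)) (z2 ** S z3))).
    by apply: eq_sw => z2 z3; rewrite /= hmulA.
  by rewrite (@sw_Sr _ _ h _ (fun t => F (p ** z1 ** S z4) (q ** t)) w) /= ?hmul1r //; lin_tac.
transitivity (sw h z (fun z1 z' => (fun t => F (p ** t) q) (z1 ** S z'))).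
  apply: eq_sw => z1 z'.
  by brw (@sw_counitl _ _ h _ (fun z4 => F (p ** z1 ** S z4) q) z'); rewrite ?hmulA //; try lin_tac.
by rewrite (@sw_Sr _ _ h _ (fun t => F (p ** t) q) z) /= ?hmul1r //; lin_tac.
Qed.

Let conjF x1 z1 z2 z3 z4 := sw h (S x1) (fun p q => F (p ** z1 ** S z4) (q ** z2 ** S z3)).

Lemma sw_S_regroup x : sw h (S x) F =
  sw h x (fun b z'' => sw h b (fun x1 w => sw h w (fun z1 z2 => sw h z''
    (fun z3 z4 => conjF x1 z1 z2 z3 z4)))).
Proof.
transitivity (sw h x (fun x1 x2 => e x2 *: sw h (S x1) F)).
  by brw (@sw_counitr _ _ h _ (fun a => sw h (S a) F) x); try lin_tac.
transitivity (sw h x (fun x1 x2 => sw h x2 (fun z1 z' => sw h z' (fun z2 z'' => sw h z''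
   (fun z3 z4 => conjF x1 z1 z2 z3 z4))))).
  apply: eq_sw => x1 x2; rewrite -sw_scaleF.
  under eq_sw => p q do rewrite (heps_sw3_conj x2 p q).
  rewrite sw_exch; apply: eq_sw => z1 z'.
  by rewrite sw_exch; apply: eq_sw => z2 z''; rewrite sw_exch.
transitivity (sw h x (fun a z' => sw h a (fun x1 z1 => sw h z' (fun z2 z'' => sw h z''
   (fun z3 z4 => conjF x1 z1 z2 z3 z4))))).
  apply: esym; apply: (@sw_coassoc _ _ h _ (fun x1 z1 z' => sw h z' (fun z2 z'' => sw h z''
   (fun z3 z4 => conjF x1 z1 z2 z3 z4))) x).
  by rewrite /conjF; split => *; lin_tac.
transitivity (sw h x (fun b z'' => sw h b (fun a z2 => sw h a (fun x1 z1 => sw h z''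
   (fun z3 z4 => conjF x1 z1 z2 z3 z4))))).
  transitivity (sw h x (fun a z' => sw h z' (fun z2 z'' => sw h a (fun x1 z1 => sw h z''
   (fun z3 z4 => conjF x1 z1 z2 z3 z4))))).
    by apply: eq_sw => a z'; rewrite sw_exch.
  apply: esym; apply: (@sw_coassoc _ _ h _ (fun a z2 z'' => sw h a (fun x1 z1 => sw h z''
   (fun z3 z4 => conjF x1 z1 z2 z3 z4))) x).
  by rewrite /conjF; split => *; lin_tac.
apply: eq_sw => b z''.
apply: (@sw_coassoc _ _ h _ (fun x1 z1 z2 => sw h z'' (fun z3 z4 => conjF x1 z1 z2 z3 z4)) b).
by rewrite /conjF; split => *; lin_tac.
Qed.

Lemma sw_S x : sw h (S x) F = sw h x (fun a b => F (S b) (S a)).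
Proof.
rewrite sw_S_regroup.
transitivity (sw h x (fun b z'' => sw h b (fun x1 w => sw h (S x1 ** w)
   (fun P Q => sw h z'' (fun z3 z4 => F (P ** S z4) (Q ** S z3)))))).
  apply: eq_sw => b z''; apply: eq_sw => x1 w.
  rewrite (@sw_mul _ _ h _ (fun P Q => sw h z'' (fun z3 z4 => F (P ** S z4) (Q ** S z3))));
    last by split => *; lin_tac.
  transitivity (sw h w (fun z1 z2 => sw h (S x1) (fun p q => sw h z''
     (fun z3 z4 => F (p ** z1 ** S z4) (q ** z2 ** S z3))))).
    by apply: eq_sw => z1 z2; rewrite /conjF sw_exch.
  by rewrite sw_exch.
transitivity (sw h x (fun b z'' => e b *: sw h z'' (fun z3 z4 => F (S z4) (S z3)))).
  apply: eq_sw => b z''.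
  brw (@sw_Sl _ _ h _ (fun t => sw h t (fun P Q => sw h z''
         (fun z3 z4 => F (P ** S z4) (Q ** S z3)))) b); last by lin_tac.
  rewrite sw_one; last by split => *; lin_tac.
  by congr (_ *: _); apply: eq_sw => z3 z4; rewrite !hmul1l.
by brw (@sw_counitl _ _ h _ (fun z'' => sw h z'' (fun z3 z4 => F (S z4) (S z3))) x); try lin_tac.
Qed.

End AntipodeCoproduct.

Lemma hSinv_mul x y : Si (x ** y) = Si y ** Si x.
Proof. by apply: (can_inj (hSK h)); rewrite hS_mul !hSinvK. Qed.
Lemma hSinv1 : Si one = one.
Proof. by rewrite -{1}hS1 hSK. Qed.
Lemma heps_Sinv x : e (Si x) = e x.
Proof. by rewrite -{2}(hSinvK h x) heps_S. Qed.

Lemma sw_Sinv (W : lmodType k) (F : H -> H -> W) x : klin2 F ->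
  sw h (Si x) F = sw h x (fun a b => F (Si b) (Si a)).
Proof.
move=> [F1 F2].
have Gb : klin2 (fun a b => F (Si b) (Si a)) by split => *; lin_tac.
rewrite -{2}(hSinvK h x) (@sw_S _ _ Gb (Si x)).
by apply: eq_sw => a b; rewrite !hSK.
Qed.

Lemma sw_Sinvl (W : lmodType k) (K : H -> W) x : klin K ->
  sw h x (fun a b => K (Si b ** a)) = e x *: K one.
Proof.
move=> Kl.
transitivity (sw h x (fun a b => (fun t => K (Si t)) (S a ** b))).
  by apply: eq_sw => a b; rewrite /= hSinv_mul hSK.
rewrite (@sw_Sl _ _ h _ (fun t => K (Si t)) x) ?hSinv1 //.
exact: (lin_comp Kl (hSinv_lin h)).
Qed.

Lemma sw_Sinvr (W : lmodType k) (K : H -> W) x : klin K ->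
  sw h x (fun a b => K (b ** Si a)) = e x *: K one.
Proof.
move=> Kl.
transitivity (sw h x (fun a b => (fun t => K (Si t)) (a ** S b))).
  by apply: eq_sw => a b; rewrite /= hSinv_mul hSK.
rewrite (@sw_Sr _ _ h _ (fun t => K (Si t)) x) ?hSinv1 //.
exact: (lin_comp Kl (hSinv_lin h)).
Qed.

End AntipodeProperties.

Section DoubleCrossProduct.
Variables (k : fieldType) (U V : lmodType k) (HU : hopf U) (HV : hopf V)
  (pr : U -> V -> k) (g : V -> U).
Hypothesis Hpr : is_pairing HU HV pr.
Hypothesis Hg : is_hopf_map_to_cop HU HV g.

Local Notation swk h x F := (@sw _ _ h k^o x F).
Local Notation swlk h n x F := (@swl _ _ h k^o n x F).
Local Notation "a **U b" := (hmul HU a b) (at level 40, left associativity).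
Local Notation "a **V b" := (hmul HV a b) (at level 40, left associativity).
Local Notation SU := (hS HU).
Local Notation SV := (hS HV).
Local Notation SiU := (hSinv HU).
Local Notation SiV := (hSinv HV).
Local Notation eU := (heps HU).
Local Notation eV := (heps HV).

Lemma prl y : @klin k U k^o (fun m => pr m y).
Proof. by case: Hpr => [[b1 b2] _ _ _ _]; exact: b1. Qed.
Lemma prr m : @klin k V k^o (pr m).
Proof. by case: Hpr => [[b1 b2] _ _ _ _]; exact: b2. Qed.
Lemma pr_mulU m n x : pr (m **U n) x = swk HV x (fun a b => pr m a * pr n b).
Proof. by case: Hpr => _ H _ _ _; rewrite H. Qed.
Lemma pr_mulV m x y : pr m (x **V y) = swk HU m (fun a b => pr a x * pr b y).
Proof. by case: Hpr => _ _ H _ _; rewrite H. Qed.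
Lemma pr_oneU x : pr (hone HU) x = eV x.
Proof. by case: Hpr => _ _ _ H _; rewrite H. Qed.
Lemma pr_oneV m : pr m (hone HV) = eU m.
Proof. by case: Hpr => _ _ _ _ H; rewrite H. Qed.
Lemma g_lin : klin g. Proof. by case: Hg. Qed.
Lemma g_mul x y : g (x **V y) = g x **U g y. Proof. by case: Hg. Qed.
Lemma g_one : g (hone HV) = hone HU. Proof. by case: Hg. Qed.
Lemma g_eps y : eU (g y) = eV y. Proof. by case: Hg. Qed.
Lemma sw_g (W : lmodType k) (F : U -> U -> W) y : klin2 F ->
  sw HU (g y) F = sw HV y (fun a b => F (g b) (g a)).
Proof. by case: Hg => _ _ _ H _ Fb; rewrite /sw (teq2_sum (F:=F) (H y) Fb) big_map. Qed.

#[local] Hint Resolve prl prr g_lin : lindb.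

Lemma pr_convSr u y :
  swk HU u (fun m2 m3 => swk HV y (fun x2 x3 => pr m2 x2 * pr m3 (SV x3))) = eU u * eV y.
Proof.
rewrite sw_exch.
transitivity (swk HV y (fun x2 x3 => pr u (x2 **V SV x3))).
  by apply: eq_sw => x2 x3; rewrite pr_mulV.
by rewrite (@sw_Sr _ _ HV k^o (pr u) y (prr u)) pr_oneV mulrC.
Qed.

Lemma pr_convSl w v :
  swk HU w (fun m1 m2 => swk HV v (fun x1 x2 => pr (SU m1) x1 * pr m2 x2)) = eU w * eV v.
Proof.
transitivity (swk HU w (fun m1 m2 => pr (SU m1 **U m2) v)).
  by apply: eq_sw => m1 m2; rewrite pr_mulU.
by rewrite (@sw_Sl _ _ HU k^o (fun t => pr t v) w (prl v)) pr_oneU.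
Qed.

(* In the convolution algebra of forms on U (x) V, [<S -, ->] is a left and
   [<-, S ->] a right inverse of the pairing; both equal the threefold product
   below. *)
Definition pr_conv3 m x := swk HU m (fun m1 m' => swk HU m' (fun m2 m3 =>
  swk HV x (fun x1 x' => swk HV x' (fun x2 x3 =>
    pr (SU m1) x1 * pr m2 x2 * pr m3 (SV x3))))).

Lemma pr_conv3_l m x : pr_conv3 m x = pr (SU m) x.
Proof.
symmetry.
transitivity (swk HU m (fun m1 m' => swk HV x (fun x1 x' =>
   (eU m' * eV x') * pr (SU m1) x1))).
  transitivity (swk HU m (fun m1 m' => eU m' *: swk HV x (fun x1 x' =>
                  eV x' *: (pr (SU m1) x1 : k^o)))).
    brw (@sw_counitr _ _ HU k^o (fun m1 => swk HV x (fun x1 x' =>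
           eV x' *: (pr (SU m1) x1 : k^o))) m); last by lin_tac.
    by brw (@sw_counitr _ _ HV k^o (fun x1 => pr (SU m) x1) x); try lin_tac.
  apply: eq_sw => m1 m'; rewrite -sw_scaleF; apply: eq_sw => x1 x'.
  by rewrite -[RHS]mulrA.
rewrite /pr_conv3; apply: eq_sw => m1 m'.
transitivity (swk HV x (fun x1 x' => swk HU m' (fun m2 m3 => swk HV x' (fun x2 x3 =>
   pr (SU m1) x1 * pr m2 x2 * pr m3 (SV x3))))); last by rewrite sw_exch.
apply: eq_sw => x1 x'; rewrite -pr_convSr.
rewrite (@klin_sw _ _ _ _ HU (fun t : k^o => (t * pr (SU m1) x1 : k^o)) m'); last by lin_tac.
apply: eq_sw => m2 m3.
rewrite (@klin_sw _ _ _ _ HV (fun t : k^o => (t * pr (SU m1) x1 : k^o)) x'); last by lin_tac.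
by apply: eq_sw => x2 x3; rewrite /= mulrC mulrA.
Qed.

Lemma pr_conv3_r m x : pr_conv3 m x = pr m (SV x).
Proof.
pose Q m1 m2 m3 x1 x2 x3 := pr (SU m1) x1 * pr m2 x2 * pr m3 (SV x3).
transitivity (swk HU m (fun w m3 => swk HU w (fun m1 m2 => swk HV x (fun x1 x' =>
   swk HV x' (fun x2 x3 => Q m1 m2 m3 x1 x2 x3))))).
  apply: esym; apply: (@sw_coassoc _ _ HU k^o (fun m1 m2 m3 => swk HV x (fun x1 x' =>
   swk HV x' (fun x2 x3 => Q m1 m2 m3 x1 x2 x3))) m).
  by rewrite /Q; split => *; lin_tac.
transitivity (swk HU m (fun w m3 => swk HV x (fun v x3 => swk HU w (fun m1 m2 =>
   swk HV v (fun x1 x2 => Q m1 m2 m3 x1 x2 x3))))).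
  apply: eq_sw => w m3.
  transitivity (swk HU w (fun m1 m2 => swk HV x (fun v x3 => swk HV v (fun x1 x2 =>
     Q m1 m2 m3 x1 x2 x3)))).
    apply: eq_sw => m1 m2.
    apply: esym; apply: (@sw_coassoc _ _ HV k^o (fun x1 x2 x3 => Q m1 m2 m3 x1 x2 x3) x).
    by rewrite /Q; split => *; lin_tac.
  by rewrite sw_exch; apply: eq_sw => v x3; rewrite sw_exch.
transitivity (swk HU m (fun w m3 => swk HV x (fun v x3 => (eU w * eV v) * pr m3 (SV x3)))).
  apply: eq_sw => w m3; apply: eq_sw => v x3.
  rewrite -pr_convSl.
  rewrite (@klin_sw _ _ _ _ HU (fun t : k^o => (t * pr m3 (SV x3) : k^o)) w); last by lin_tac.
  apply: eq_sw => m1 m2.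
  by rewrite (@klin_sw _ _ _ _ HV (fun t : k^o => (t * pr m3 (SV x3) : k^o)) v); last by lin_tac.
transitivity (swk HU m (fun w m3 => eU w *: swk HV x (fun v x3 =>
                eV v *: (pr m3 (SV x3) : k^o)))).
  apply: eq_sw => w m3; rewrite -sw_scaleF; apply: eq_sw => v x3.
  by rewrite -[LHS]mulrA.
brw (@sw_counitl _ _ HU k^o (fun m3 => swk HV x (fun v x3 =>
       eV v *: (pr m3 (SV x3) : k^o))) m); last by lin_tac.
by brw (@sw_counitl _ _ HV k^o (fun x3 => pr m (SV x3)) x); try lin_tac.
Qed.

Lemma pr_S m x : pr (SU m) x = pr m (SV x).
Proof. by rewrite -pr_conv3_l pr_conv3_r. Qed.

Lemma pr_Sinv m x : pr (SiU m) x = pr m (SiV x).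
Proof. by rewrite -{2}(hSinvK HU m) pr_S hSinvK. Qed.

(* Both sides are convolution inverses of [g] viewed as a map into U^cop. *)
Lemma g_Sinv y : g (SiV y) = SU (g y).
Proof.
have inv_l z : sw HV z (fun d b => SU (g b) **U g d) = eV z *: hone HU.
  rewrite -(@sw_g _ (fun p q => SU p **U q) z); last by split => *; lin_tac.
  by rewrite (@sw_Sl _ _ HU _ (fun t => t) (g z)) // g_eps.
have inv_r z : sw HV z (fun c d => g d **U g (SiV c)) = eV z *: hone HU.
  transitivity (sw HV z (fun c d => g (d **V SiV c))).
    by apply: eq_sw => c d; rewrite g_mul.
  by rewrite (@sw_Sinvr _ _ HV _ g z g_lin) g_one.
symmetry.
transitivity (sw HV y (fun a b => sw HV a (fun c d => SU (g b) **U (g d **U g (SiV c))))).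
  transitivity (sw HV y (fun a b => eV a *: SU (g b))).
    by brw (@sw_counitl _ _ HV _ (fun b => SU (g b)) y); try lin_tac.
  apply: eq_sw => a b.
  rewrite -(@klin_sw _ _ _ _ HV (hmul HU (SU (g b))) a _ (hmul_linr HU _)) inv_r.
  by rewrite (klinZ _ _ (hmul_linr HU _)) hmul1r.
transitivity (sw HV y (fun c b' => sw HV b' (fun d b => SU (g b) **U (g d **U g (SiV c))))).
  apply: (@sw_coassoc _ _ HV _ (fun c d b => SU (g b) **U (g d **U g (SiV c))) y).
  by split => *; lin_tac.
transitivity (sw HV y (fun c b' => eV b' *: g (SiV c))).
  apply: eq_sw => c b'.
  transitivity (sw HV b' (fun d b => (fun t => t **U g (SiV c)) (SU (g b) **U g d))).
    by apply: eq_sw => d b; rewrite /= hmulA.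
  rewrite -(@klin_sw _ _ _ _ HV (fun t => t **U g (SiV c)) b' (fun d b => SU (g b) **U g d))
    ?inv_l /=; last exact: hmul_linl.
  by rewrite (klinZ _ _ (hmul_linl HU _)) hmul1l.
by brw (@sw_counitr _ _ HV _ (fun c => g (SiV c)) y); try lin_tac.
Qed.

Lemma action_pairing_form m y :
  \sum_(p <- hcop HU m) \sum_(b <- cop2 HV y)
     (pr p.1 (SiV b.1.1) * pr p.2 (SiV (SiV b.2))) *: b.1.2 =
  \sum_(b <- cop2 HV y) pr m (SiV (SiV b.2 **V b.1.1)) *: b.1.2.
Proof.
rewrite exchange_big; apply: eq_bigr => b _.
by rewrite hSinv_mul pr_mulV /sw scaler_suml.
Qed.

Lemma theta_coaction y :
  teq3 (reassoc [seq (g (SiV b.2 **V b.1.1), (SU (g q.2), q.1))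
                 | b <- cop2 HV y, q <- hcop HV b.1.2])
       (reassoc (lamB HU HV g (theta HU HV g y))).
Proof.
move=> phi [p1 p2 p3].
rewrite /reassoc !big_map /cop2 !big_allpairs_dep /lamB /theta big_flatten /= !big_map.
symmetry; under eq_bigr => j _ do rewrite big_allpairs_dep /=; symmetry.
have q1 b c : @klin k U k^o (fun a => phi a b c) by exact: p1.
have q2 a c : @klin k U k^o (fun b => phi a b c) by exact: p2.
have q3 a b : @klin k V k^o (phi a b) by exact: p3.
clear p1 p2 p3.
pose Psi r1 r2 u v := phi (SU (g v) **U g r1) (SU (g u)) r2.
change (swk HV y (fun y1 a => swk HV a (fun c y4 => swk HV c (fun y2 y3 =>
   phi (g (SiV y4 **V y1)) (SU (g y3)) y2))) =
   swk HV y (fun A B => swk HU (SU (g B)) (fun q1 q2 => swk HV A (fun r1 r2 =>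
   phi (q2 **U g r1) q1 r2)))).
symmetry.
transitivity (swk HV y (fun A B => swk HV B (fun u v => swk HV A (fun r1 r2 => Psi r1 r2 u v)))).
  apply: eq_sw => A B.
  rewrite (@sw_S _ _ HU k^o (fun q1 q2 => swk HV A (fun r1 r2 => phi (q2 **U g r1) q1 r2)));
    last by split => *; lin_tac.
  rewrite (@sw_g k^o (fun a b => swk HV A (fun r1 r2 => phi (SU a **U g r1) (SU b) r2))) //.
  by split => *; lin_tac.
transitivity (swk HV y (fun r1 a => swk HV a (fun r2 B => swk HV B (fun u v => Psi r1 r2 u v)))).
  transitivity (swk HV y (fun A B => swk HV A (fun r1 r2 => swk HV B (fun u v => Psi r1 r2 u v)))).
    by apply: eq_sw => A B; rewrite sw_exch.
  apply: (@sw_coassoc _ _ HV k^o (fun r1 r2 B => swk HV B (fun u v => Psi r1 r2 u v)) y).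
  by split => *; rewrite /Psi; lin_tac.
apply: eq_sw => y1 a.
transitivity (swk HV a (fun c v => swk HV c (fun r2 u => Psi y1 r2 u v))).
  apply: esym; apply: (@sw_coassoc _ _ HV k^o (fun r2 u v => Psi y1 r2 u v) a).
  by split => *; rewrite /Psi; lin_tac.
apply: eq_sw => c y4; apply: eq_sw => y2 y3.
by rewrite /Psi g_mul g_Sinv.
Qed.

Section ActionFormula.
Hypothesis Hcomm : gamma_comm HU HV pr g.
Variable phi : U -> V -> k.
Hypothesis phi1 : forall y, @klin k U k^o (fun m => phi m y).
Hypothesis phi2 : forall m, @klin k V k^o (phi m).
#[local] Hint Resolve phi1 phi2 : lindb.

Lemma sum_Dmul (W : nmodType) (G : U -> V -> W) s t :
  \sum_(p <- Dmul HU HV pr s t) G p.1 p.2 =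
  \sum_(a <- s) \sum_(b <- t) \sum_(r <- Dmul_pure HU HV pr a.1 a.2 b.1 b.2) G r.1 r.2.
Proof.
by rewrite /Dmul big_flatten /= big_allpairs_dep.
Qed.

Lemma sum_Dmul_pure (W : nmodType) (G : U -> V -> W) a x n y' :
  \sum_(r <- Dmul_pure HU HV pr a x n y') G r.1 r.2 =
  \sum_(p <- hcop HU n) \sum_(p0 <- hcop HU p.2) \sum_(p1 <- hcop HV x) \sum_(p2 <- hcop HV p1.2)
    G ((pr p0.2 p1.1 * pr (SiU p.1) p2.2) *: (a **U p0.1)) (p2.1 **V y').
Proof.
rewrite /Dmul_pure big_allpairs_dep /cop2 big_allpairs_dep /=.
apply: eq_bigr => p _; apply: eq_bigr => q _; by rewrite big_allpairs_dep.
Qed.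

(* [phi_mul_i a x n] is [phi] evaluated on the product (a (x) x) i(n) in D. *)
Definition phi_mul_i a x n :=
  swk HU n (fun c1 c' => swk HU c' (fun c2 c3 => swk HV x (fun b1 b' => swk HV b' (fun b2 b3 =>
    phi ((pr c3 b1 * pr (SiU c1) b3) *: (a **U c2)) (b2 **V hone HV))))).

Lemma phi_mul_i_lin1 x n : klin (fun a => phi_mul_i a x n : k^o).
Proof. rewrite /phi_mul_i; lin_tac. Qed.
Lemma phi_mul_i_lin2 a n : klin (fun x => phi_mul_i a x n : k^o).
Proof. rewrite /phi_mul_i; lin_tac. Qed.

Lemma sum_Dact m s :
  \sum_(p <- Dact HU HV pr m s) phi p.1 p.2 =
  swk HU m (fun k1 k2 => \sum_(q <- s) sw HU q.1 (fun c1 c' => sw HU c' (fun c2 c3 =>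
     swk HV (hone HV) (fun b1 b' => swk HV b' (fun b2 b3 =>
       phi_mul_i ((pr c3 b1 * pr (SiU c1) b3) *: (k2 **U c2)) (b2 **V q.2) (SiU k1)))))).
Proof.
rewrite /Dact big_flatten /= big_map /sw; apply: eq_bigr => kk _.
pose G u v := \sum_(b <- iD HV (SiU kk.1))
                 \sum_(r <- Dmul_pure HU HV pr u v b.1 b.2) phi r.1 r.2.
rewrite sum_Dmul; brw (sum_Dmul G (iD HV kk.2) s).
rewrite big_seq1 /=; apply: eq_bigr => q _.
brw (sum_Dmul_pure G kk.2 (hone HV) q.1 q.2).
do 4![apply: eq_bigr => ? _].
by rewrite /G big_seq1 /= sum_Dmul_pure.
Qed.

#[local] Hint Resolve phi_mul_i_lin1 phi_mul_i_lin2 : lindb.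

Lemma phi_mul_i_iD q1 q2 n k2 :
  swk HU q1 (fun c1 c' => swk HU c' (fun c2 c3 =>
     swk HV (hone HV) (fun b1 b' => swk HV b' (fun b2 b3 =>
       phi_mul_i ((pr c3 b1 * pr (SiU c1) b3) *: (k2 **U c2)) (b2 **V q2) n)))) =
  phi_mul_i (k2 **U q1) q2 n.
Proof.
transitivity (swk HU q1 (fun c1 c' => eU c1 *: swk HU c' (fun c2 c3 =>
   eU c3 *: (phi_mul_i (k2 **U c2) q2 n : k^o)))).
  apply: eq_swk => c1 c'; rewrite -sw_scaleF; apply: eq_swk => c2 c3.
  rewrite sw_one; last by split => *; lin_tac.
  rewrite sw_one; last by split => *; lin_tac.
  rewrite pr_oneV pr_oneV heps_Sinv hmul1l.
  rewrite (klinZ _ _ (phi_mul_i_lin1 q2 n)).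
  change ((eU c3 * eU c1) * phi_mul_i (k2 **U c2) q2 n =
          eU c1 * (eU c3 * phi_mul_i (k2 **U c2) q2 n)).
  by rewrite mulrA [eU c1 * _]mulrC.
brw (@sw_counitl _ _ HU k^o (fun c' => swk HU c' (fun c2 c3 =>
       eU c3 *: (phi_mul_i (k2 **U c2) q2 n : k^o))) q1); last by lin_tac.
by brw (@sw_counitr _ _ HU k^o (fun c2 => (phi_mul_i (k2 **U c2) q2 n : k^o)) q1); try lin_tac.
Qed.

Lemma sum_Dact_theta m y :
  \sum_(p <- Dact HU HV pr m (theta HU HV g y)) phi p.1 p.2 =
  swk HU m (fun k1 k2 => swk HV y (fun y1 w => phi_mul_i (k2 **U SU (g w)) y1 (SiU k1))).
Proof.
rewrite sum_Dact; apply: eq_swk => k1 k2.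
rewrite /theta big_map /sw; apply: eq_bigr => q _ /=.
exact: phi_mul_i_iD.
Qed.

Lemma gamma_comm_sw z n : g z **U n = sw HU n (fun c1 c' => sw HU c' (fun c2 c3 =>
   sw HV z (fun e1 e' => sw HV e' (fun e2 e3 => (pr (SiU c1) e3 * pr c3 e1) *: (c2 **U g e2))))).
Proof.
rewrite Hcomm /cop2 /sw !big_allpairs_dep; apply: eq_bigr => p _; apply: eq_bigr => q _.
by rewrite big_allpairs_dep.
Qed.

Lemma phi_swU k2 b2 x (F : U -> U -> U) :
  phi (k2 **U sw HU x F) b2 = swk HU x (fun a b => phi (k2 **U F a b) b2).
Proof. apply: (@klin_sw _ _ _ _ HU (fun t => (phi (k2 **U t) b2 : k^o))); lin_tac. Qed.
Lemma phi_swV k2 b2 x (F : V -> V -> U) :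
  phi (k2 **U sw HV x F) b2 = swk HV x (fun a b => phi (k2 **U F a b) b2).
Proof. apply: (@klin_sw _ _ _ _ HV (fun t => (phi (k2 **U t) b2 : k^o))); lin_tac. Qed.

Lemma phi_commute_gamma k2 w a2 b2 : phi (k2 **U SU (g w) **U SiU a2) b2 =
  swk HV w (fun u' v' => swk HV u' (fun p' q' => swk HU a2 (fun u v => swk HU u (fun p q =>
   (pr v (SiV (SiV (SiV p'))) * pr p (SiV (SiV v'))) * phi (k2 **U (SiU q **U g (SiV q'))) b2)))).
Proof.
pose T p q v p' q' v' :=
  (pr v (SiV (SiV (SiV p'))) * pr p (SiV (SiV v'))) * phi (k2 **U (SiU q **U g (SiV q'))) b2.
rewrite -g_Sinv -hmulA gamma_comm_sw.
transitivity (swk HU (SiU a2) (fun c1 c' => swk HU c' (fun c2 c3 =>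
   swk HV (SiV w) (fun e1 e' => swk HV e' (fun e2 e3 =>
     (pr (SiU c1) e3 * pr c3 e1) * phi (k2 **U (c2 **U g e2)) b2))))).
  rewrite phi_swU; apply: eq_swk => c1 c'; rewrite phi_swU; apply: eq_swk => c2 c3.
  rewrite phi_swV; apply: eq_swk => e1 e'; rewrite phi_swV; apply: eq_swk => e2 e3.
  by rewrite (klinZ _ _ (hmul_linr HU k2)) (klinZ _ _ (phi1 b2)).
rewrite (@sw_Sinv _ _ HU k^o); last by split => *; lin_tac.
transitivity (swk HU a2 (fun u v => swk HU u (fun p q =>
   swk HV (SiV w) (fun e1 e' => swk HV e' (fun e2 e3 =>
     (pr (SiU (SiU v)) e3 * pr (SiU p) e1) * phi (k2 **U (SiU q **U g e2)) b2))))).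
  by apply: eq_swk => u v; rewrite (@sw_Sinv _ _ HU k^o) //; split => *; lin_tac.
transitivity (swk HU a2 (fun u v => swk HU u (fun p q =>
   swk HV w (fun u' v' => swk HV u' (fun p' q' => T p q v p' q' v'))))).
  apply: eq_swk => u v; apply: eq_swk => p q.
  rewrite (@sw_Sinv _ _ HV k^o); last by split => *; lin_tac.
  apply: eq_swk => u' v'.
  rewrite (@sw_Sinv _ _ HV k^o); last by split => *; lin_tac.
  by apply: eq_swk => p' q'; rewrite /T !pr_Sinv.
transitivity (swk HV w (fun u' v' => swk HU a2 (fun u v => swk HU u (fun p q =>
   swk HV u' (fun p' q' => T p q v p' q' v'))))).
  transitivity (swk HU a2 (fun u v => swk HV w (fun u' v' => swk HU u (fun p q =>
     swk HV u' (fun p' q' => T p q v p' q' v'))))).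
    by apply: eq_swk => u v; rewrite sw_exch.
  by rewrite sw_exch.
apply: eq_swk => u' v'.
transitivity (swk HU a2 (fun u v => swk HV u' (fun p' q' => swk HU u (fun p q =>
   T p q v p' q' v')))).
  by apply: eq_swk => u v; rewrite sw_exch.
by rewrite sw_exch.
Qed.

(* The summand of [phi (m |> theta y)] over the sixfold coproducts of [m] and
   [y], once [gamma] has been moved to the right. *)
Definition act_term a1 p q v b k2 b1 b2 b3 p' q' v' : k :=
  (pr a1 (SiV b1) * pr b (SiV (SiV b3))) *
  ((pr v (SiV (SiV (SiV p'))) * pr p (SiV (SiV v'))) * phi (k2 **U (SiU q **U g (SiV q'))) b2).

Definition act_inner a1 a2 b k2 b1 b2 b3 w := swk HV w (fun u' v' => swk HV u' (fun p' q' =>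
  swk HU a2 (fun u v => swk HU u (fun p q => act_term a1 p q v b k2 b1 b2 b3 p' q' v')))).

Definition act_outer k1 k2 y1 w := swk HV y1 (fun b1 b' => swk HV b' (fun b2 b3 =>
  swk HU k1 (fun A B => swk HU A (fun a1 a2 => act_inner a1 a2 B k2 b1 b2 b3 w)))).

Lemma phi_mul_i_theta k1 k2 y1 w : phi_mul_i (k2 **U SU (g w)) y1 (SiU k1) = act_outer k1 k2 y1 w.
Proof.
rewrite /phi_mul_i (@sw_Sinv _ _ HU k^o); last by split => *; lin_tac.
transitivity (swk HU k1 (fun A B => swk HU A (fun a1 a2 =>
   swk HV y1 (fun b1 b' => swk HV b' (fun b2 b3 => act_inner a1 a2 B k2 b1 b2 b3 w))))).
  apply: eq_swk => A B; rewrite (@sw_Sinv _ _ HU k^o); last by split => *; lin_tac.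
  apply: eq_swk => a1 a2; apply: eq_swk => b1 b'; apply: eq_swk => b2 b3.
  rewrite hmul1r (klinZ _ _ (phi1 b2)) phi_commute_gamma !pr_Sinv.
  rewrite -sw_scaleF /act_inner; apply: eq_swk => u' v'; rewrite -sw_scaleF; apply: eq_swk => p' q'.
  rewrite -sw_scaleF; apply: eq_swk => u v; rewrite -sw_scaleF; apply: eq_swk => p q.
  by rewrite /act_term.
rewrite /act_outer.
transitivity (swk HU k1 (fun A B => swk HV y1 (fun b1 b' =>
   swk HU A (fun a1 a2 => swk HV b' (fun b2 b3 => act_inner a1 a2 B k2 b1 b2 b3 w))))).
  by apply: eq_swk => A B; rewrite sw_exch.
rewrite sw_exch; apply: eq_swk => b1 b'.
transitivity (swk HU k1 (fun A B => swk HV b' (fun b2 b3 => swk HU A (fun a1 a2 =>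
   act_inner a1 a2 B k2 b1 b2 b3 w)))).
  by apply: eq_swk => A B; rewrite sw_exch.
by rewrite sw_exch.
Qed.

#[local] Hint Unfold act_term act_inner act_outer : mldefs.

Lemma swl_act_term_inner m y :
  swlk HU 5 m (fun K => swlk HV 5 y (fun Y =>
     act_term K`_0 K`_1 K`_2 K`_3 K`_4 K`_5 Y`_0 Y`_1 Y`_2 Y`_3 Y`_4 Y`_5)) =
  swlk HU 3 m (fun K => swlk HV 3 y (fun Y =>
     act_inner K`_0 K`_1 K`_2 K`_3 Y`_0 Y`_1 Y`_2 Y`_3)).
Proof.
rewrite (@swl_merge_out _ k^o _ _ HU HV 4 5 1 m y _
  (fun K Y => swk HU K`_1 (fun p q =>
     act_term K`_0 p q K`_2 K`_3 K`_4 Y`_0 Y`_1 Y`_2 Y`_3 Y`_4 Y`_5))) //;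
  last first.
- by move=> K Y sK sY; destr_list.
- multilin_tac.
rewrite (@swl_merge_out _ k^o _ _ HU HV 3 5 1 m y _
  (fun K Y => swk HU K`_1 (fun u v => swk HU u (fun p q =>
     act_term K`_0 p q v K`_2 K`_3 Y`_0 Y`_1 Y`_2 Y`_3 Y`_4 Y`_5)))) //;
  last first.
- by move=> K Y sK sY; destr_list.
- multilin_tac.
rewrite (@swl_merge_in _ k^o _ _ HU HV 3 4 3 m y _
  (fun K Y => swk HV Y`_3 (fun p' q' => swk HU K`_1 (fun u v => swk HU u (fun p q =>
     act_term K`_0 p q v K`_2 K`_3 Y`_0 Y`_1 Y`_2 p' q' Y`_4))))) //;
  last first.
- by move=> K Y sK sY; destr_list.
- move=> K sK; multilin_tac.
Qed.

Lemma swl_act_term_nest m y :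
  swlk HU 5 m (fun K => swlk HV 5 y (fun Y =>
     act_term K`_0 K`_1 K`_2 K`_3 K`_4 K`_5 Y`_0 Y`_1 Y`_2 Y`_3 Y`_4 Y`_5)) =
  swk HU m (fun k1 k2 => swk HV y (fun y1 w => act_outer k1 k2 y1 w)).
Proof.
rewrite swl_act_term_inner.
rewrite (@swl_merge_out _ k^o _ _ HU HV 2 3 0 m y _
  (fun K Y => swk HU K`_0 (fun a1 a2 => act_inner a1 a2 K`_1 K`_2 Y`_0 Y`_1 Y`_2 Y`_3))) //;
  last first.
- by move=> K Y sK sY; destr_list.
- multilin_tac.
rewrite (@swl_merge_out _ k^o _ _ HU HV 1 3 0 m y _
  (fun K Y => swk HU K`_0 (fun A B => swk HU A (fun a1 a2 =>
     act_inner a1 a2 B K`_1 Y`_0 Y`_1 Y`_2 Y`_3)))) //;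
  last first.
- by move=> K Y sK sY; destr_list.
- multilin_tac.
rewrite (@swl_merge_in _ k^o _ _ HU HV 1 2 1 m y _
  (fun K Y => swk HV Y`_1 (fun b2 b3 => swk HU K`_0 (fun A B => swk HU A (fun a1 a2 =>
     act_inner a1 a2 B K`_1 Y`_0 b2 b3 Y`_2))))) //;
  last first.
- by move=> K Y sK sY; destr_list.
- move=> K sK; multilin_tac.
rewrite (@swl_merge_in _ k^o _ _ HU HV 1 1 0 m y _
  (fun K Y => act_outer K`_0 K`_1 Y`_0 Y`_1)) //;
  last first.
- by move=> K Y sK sY; destr_list.
- move=> K sK; multilin_tac.
Qed.

Lemma sw_pr_Sinv_cancel x c R :
  swk HV x (fun a b => pr c (SiV (SiV (SiV b **V a))) * R) = eV x * (eU c * R).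
Proof.
have := @sw_Sinvl _ _ HV k^o (fun t => (pr c (SiV (SiV t)) * R : k^o)) x.
rewrite /= !hSinv1 pr_oneV => -> //; lin_tac.
Qed.

Lemma sw_phi_Sinv_cancel x c1 c2 X y1 :
  swk HU x (fun a b => c1 * (c2 * phi (b **U (SiU a **U X)) y1)) = eU x * (c1 * (c2 * phi X y1)).
Proof.
have H := @sw_Sinvr _ _ HU k^o (fun t => (c1 * (c2 * phi (t **U X) y1) : k^o)) x.
transitivity (swk HU x (fun a b => (c1 * (c2 * phi ((b **U SiU a) **U X) y1)))).
  by apply: eq_swk => a b; rewrite hmulA.
rewrite /= in H; rewrite H; last by lin_tac.
by rewrite hmul1l.
Qed.

Lemma swl_act_term_cancelV m y :
  swlk HU 5 m (fun K => swlk HV 5 y (fun Y =>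
     act_term K`_0 K`_1 K`_2 K`_3 K`_4 K`_5 Y`_0 Y`_1 Y`_2 Y`_3 Y`_4 Y`_5)) =
  swlk HU 4 m (fun K => swlk HV 3 y (fun Y => eU K`_3 * (pr K`_0 (SiV Y`_0) *
     (pr K`_1 (SiV (SiV Y`_3)) * phi (K`_4 **U (SiU K`_2 **U g (SiV Y`_2))) Y`_1)))).
Proof.
rewrite (@swl_merge_out _ k^o _ _ HU HV 4 5 3 m y _
  (fun K Y => pr K`_3 (SiV (SiV (SiV Y`_3 **V Y`_2))) * (pr K`_0 (SiV Y`_0) *
     (pr K`_1 (SiV (SiV Y`_5)) * phi (K`_4 **U (SiU K`_2 **U g (SiV Y`_4))) Y`_1)))) //;
  last first.
- move=> K Y sK sY; destr_list; rewrite /act_term /=.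
  rewrite !hSinv_mul pr_mulV /sw mulr_suml; apply: eq_bigr => p _; ring.
- multilin_tac.
rewrite (@swl_merge_in _ k^o _ _ HU HV 4 4 2 m y _
  (fun K Y => eV Y`_2 * (eU K`_3 * (pr K`_0 (SiV Y`_0) *
     (pr K`_1 (SiV (SiV Y`_4)) * phi (K`_4 **U (SiU K`_2 **U g (SiV Y`_3))) Y`_1))))) //;
  last first.
- by move=> K Y sK sY; destr_list; rewrite /= sw_pr_Sinv_cancel.
- move=> K sK; multilin_tac.
rewrite (@swl_merge_in _ k^o _ _ HU HV 4 3 2 m y _
  (fun K Y => eU K`_3 * (pr K`_0 (SiV Y`_0) *
     (pr K`_1 (SiV (SiV Y`_3)) * phi (K`_4 **U (SiU K`_2 **U g (SiV Y`_2))) Y`_1)))) //;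
  last first.
- by move=> K Y sK sY; destr_list; rewrite /=; apply: swk_counitl; lin_tac.
- move=> K sK; multilin_tac.
Qed.

Lemma swl_act_term_collapse m y :
  swlk HU 5 m (fun K => swlk HV 5 y (fun Y =>
     act_term K`_0 K`_1 K`_2 K`_3 K`_4 K`_5 Y`_0 Y`_1 Y`_2 Y`_3 Y`_4 Y`_5)) =
  swlk HU 1 m (fun K => swlk HV 3 y (fun Y =>
     (pr K`_0 (SiV Y`_0) * pr K`_1 (SiV (SiV Y`_3))) * phi (SU (g Y`_2)) Y`_1)).
Proof.
rewrite swl_act_term_cancelV.
rewrite (@swl_merge_out _ k^o _ _ HU HV 3 3 3 m y _
  (fun K Y => pr K`_0 (SiV Y`_0) *
     (pr K`_1 (SiV (SiV Y`_3)) * phi (K`_3 **U (SiU K`_2 **U g (SiV Y`_2))) Y`_1))) //;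
  last first.
- move=> K Y sK sY; destr_list; rewrite /=.
  by apply: swk_counitl; lin_tac.
- multilin_tac.
rewrite (@swl_merge_out _ k^o _ _ HU HV 2 3 2 m y _
  (fun K Y => eU K`_2 * (pr K`_0 (SiV Y`_0) *
     (pr K`_1 (SiV (SiV Y`_3)) * phi (g (SiV Y`_2)) Y`_1)))) //;
  last first.
- by move=> K Y sK sY; destr_list; rewrite /= sw_phi_Sinv_cancel.
- multilin_tac.
rewrite (@swl_merge_out _ k^o _ _ HU HV 1 3 1 m y _
  (fun K Y => pr K`_0 (SiV Y`_0) *
     (pr K`_1 (SiV (SiV Y`_3)) * phi (g (SiV Y`_2)) Y`_1))) //;
  last first.
- move=> K Y sK sY; destr_list; rewrite /=.
  by apply: swk_counitr; lin_tac.
- multilin_tac.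
apply: eq_swl => K sK; apply: eq_swl => Y sY.
by rewrite g_Sinv mulrA.
Qed.

Lemma theta_act_form m y :
  \sum_(p <- theta HU HV g (\sum_(p <- hcop HU m) \sum_(b <- cop2 HV y)
                  (pr p.1 (SiV b.1.1) * pr p.2 (SiV (SiV b.2))) *: b.1.2)) phi p.1 p.2 =
  swlk HU 1 m (fun K => swlk HV 3 y (fun Y =>
     (pr K`_0 (SiV Y`_0) * pr K`_1 (SiV (SiV Y`_3))) * phi (SU (g Y`_2)) Y`_1)).
Proof.
rewrite (@swl_merge_in _ k^o _ _ HU HV 1 2 1 m y _
  (fun K Y => (pr K`_0 (SiV Y`_0) * pr K`_1 (SiV (SiV Y`_2))) *
      swk HV Y`_1 (fun c d => phi (SU (g d)) c))) //; last first.
- by move=> K Y sK sY; destr_list; rewrite /= mul_sw.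
- move=> K sK; multilin_tac.
rewrite /theta big_map.
have L : klin (fun x => swk HV x (fun a b => phi (SU (g b)) a)) by lin_tac.
transitivity (swk HV (\sum_(p <- hcop HU m) \sum_(b <- cop2 HV y)
                  (pr p.1 (SiV b.1.1) * pr p.2 (SiV (SiV b.2))) *: b.1.2)
         (fun a b => phi (SU (g b)) a)); first by [].
rewrite (klin_sum _ _ L) /swl /=; apply: eq_bigr => p _.
rewrite (klin_sum _ _ L) /cop2 big_allpairs_dep /=; apply: eq_bigr => q _.
rewrite [in RHS]/sw; apply: eq_bigr => r _.
by rewrite (klinZ _ _ L).
Qed.

Lemma theta_action m y :
  \sum_(p <- theta HU HV g (\sum_(p <- hcop HU m) \sum_(b <- cop2 HV y)
                  (pr p.1 (SiV b.1.1) * pr p.2 (SiV (SiV b.2))) *: b.1.2)) phi p.1 p.2 =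
  \sum_(p <- Dact HU HV pr m (theta HU HV g y)) phi p.1 p.2.
Proof.
rewrite theta_act_form -swl_act_term_collapse swl_act_term_nest sum_Dact_theta.
apply: eq_swk => k1 k2; apply: eq_swk => y1 w.
by rewrite phi_mul_i_theta.
Qed.


End ActionFormula.

End DoubleCrossProduct.

Unset Implicit Arguments.
Theorem mainTheorem5 (k : fieldType) (U V : lmodType k) (HU : hopf U) (HV : hopf V)
  (pr : U -> V -> k) (g : V -> U)
  (Hpr : is_pairing HU HV pr)
  (Hg : is_hopf_map_to_cop HU HV g)
  (Hcomm : gamma_comm HU HV pr g) :
  forall (m : U) (y : V),
    let SVi := hSinv HV in
    let rhs1 := \sum_(p <- hcop HU m) \sum_(b <- cop2 HV y)
                  (pr p.1 (SVi b.1.1) * pr p.2 (SVi (SVi b.2))) *: b.1.2 in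
    let rhs2 := \sum_(b <- cop2 HV y)
                  pr m (SVi (hmul HV (SVi b.2) b.1.1)) *: b.1.2 in
    [/\ teq2 (theta HU HV g rhs1) (Dact HU HV pr m (theta HU HV g y)),
        rhs1 = rhs2 &
        teq3 (reassoc [seq (g (hmul HV (SVi b.2) b.1.1), (hS HU (g q.2), q.1))
                       | b <- cop2 HV y, q <- hcop HV b.1.2])
             (reassoc (lamB HU HV g (theta HU HV g y)))].
Proof.
move=> m y SVi rhs1 rhs2; split.
- by move=> phi [phi1 phi2]; exact: (theta_action Hpr Hg Hcomm phi1 phi2).
- exact: (action_pairing_form Hpr m y).
- exact: (theta_coaction Hg y).
Qed.
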